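(* Let $a,b,c,a',b',c',d,e,f,g$ be real numbers and let $P=P(a,b,c,a',b',c',d,e,f,g)$ be the $6\times6$ Hermitian matrix defined in the context. Then $P$ is positive semidefinite of rank $2$ if and only if $$a^2+b^2+c^2=1,\quad a'^2+b'^2+c'^2=1,\quad d=aa'+bb'+cc',\quad e=b'c-bc',\quad f=ac'-a'c,\quad g=a'b-ab'.$$ Moreover, in that case $P=QQ^{\mathrm H}$, where $Q$ is the $6\times 2$ matrix $$Q=\begin{pmatrix}1&0\\0&1\\ ci & b+ai\\ -b+ai & -ci\\ c'i & b'+a'i\\ -b'+a'i & -c'i\end{pmatrix}.$$
   Context: $i=\sqrt{-1}$, $\cdot^{\mathrm H}$ is the conjugate transpose. For real $a,b,c,a',b',c',d,e,f,g$, define the $6\times 6$ complex matrix $$P(a,b,c,a',b',c',d,e,f,g)=\begin{pmatrix} 1&0&-ci&-b-ai&-c'i&-b'-a'i\\ 0&1&b-ai&ci&b'-a'i&c'i\\ ci&b+ai&1&0&d-gi&-f-ei\\ -b+ai&-ci&0&1&f-ei&d+gi\\ c'i&b'+a'i&d+gi&f+ei&1&0\\ -b'+a'i&-c'i&-f+ei&d-gi&0&1 \end{pmatrix},$$ which is Hermitian. *)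

From HB Require Import structures.
From mathcomp Require Import all_boot all_order all_algebra.
From mathcomp Require Import complex.
Set Implicit Arguments. Unset Strict Implicit. Unset Printing Implicit Defensive.
Import Order.TTheory GRing.Theory Num.Theory.
Local Open Scope ring_scope.
Local Open Scope complex_scope.

(* Complex numbers are R[i] = complex R over a real closed field R
   (for R = the real numbers this is the usual field C). *)

Definition conjT (R : rcfType) (m n : nat) (A : 'M[R[i]]_(m, n)) : 'M[R[i]]_(n, m) :=
  (map_mx (@conjc R) A)^T.

(* Hermitian positive semidefinite: A^H = A and v^H A v >= 0 for all v
   (the order on R[i] is the partial order of a numDomain: 0 <= z iff z is
   a nonnegative real). *)
Definition psd (R : rcfType) (n : nat) (A : 'M[R[i]]_n) : Prop :=
  conjT A = A /\ forall v : 'cV[R[i]]_n, 0 <= (conjT v *m A *m v) 0 0.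

Definition mx_of_rows (R : rcfType) (m n : nat) (rows : seq (seq R[i])) : 'M[R[i]]_(m, n) :=
  \matrix_(i < m, j < n) nth 0 (nth [::] rows i) j.

Definition Pmx (R : rcfType) (a b c a' b' c' d e f g : R) : 'M[R[i]]_6 :=
  mx_of_rows 6 6
  [:: [:: 1; 0; 0 -i* c; (-b) -i* a; 0 -i* c'; (-b') -i* a'];
      [:: 0; 1; b -i* a; 0 +i* c; b' -i* a'; 0 +i* c'];
      [:: 0 +i* c; b +i* a; 1; 0; d -i* g; (-f) -i* e];
      [:: (-b) +i* a; 0 -i* c; 0; 1; f -i* e; d +i* g];
      [:: 0 +i* c'; b' +i* a'; d +i* g; f +i* e; 1; 0];
      [:: (-b') +i* a'; 0 -i* c'; (-f) +i* e; d -i* g; 0; 1] ].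

Definition Qmx (R : rcfType) (a b c a' b' c' : R) : 'M[R[i]]_(6, 2) :=
  mx_of_rows 6 2
  [:: [:: 1; 0];
      [:: 0; 1];
      [:: 0 +i* c; b +i* a];
      [:: (-b) +i* a; 0 -i* c];
      [:: 0 +i* c'; b' +i* a'];
      [:: (-b') +i* a'; 0 -i* c'] ].

From HB Require Import structures.
From mathcomp Require Import all_boot all_order all_algebra.
From mathcomp Require Import complex.
From mathcomp Require Import ring lra.
Import Order.TTheory GRing.Theory Num.Theory.
Local Open Scope ring_scope.

(* P = Q Q^H is checked entrywise, which gives positive semidefiniteness and
   rank at most 2; the identity block in the top-left corner gives rank at
   least 2. Conversely, if rank P <= 2 then every 3x3 minor containing that
   identity block vanishes, i.e. P_kl = P_k0 P_0l + P_k1 P_1l; the entries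
   (2,2), (4,4), (2,4) and (2,5) of these identities are exactly the six
   parameter equations. *)

Lemma mxrank_mxsub {F : fieldType} {m n m' n'} (f : 'I_m' -> 'I_m)
    (g : 'I_n' -> 'I_n) (A : 'M[F]_(m, n)) :
  (\rank (mxsub f g A) <= \rank A)%N.
Proof.
rewrite -[A in mxsub _ _ A]mulmx1 mxsub_mul.
by apply: leq_trans (mxrankM_maxl _ _) _; apply/mxrankS/rowsub_sub.
Qed.

Lemma mxrank_le2_entry {F : fieldType} {m n} {A : 'M[F]_(m, n)} {i0 i1 j0 j1} k l :
  A i0 j0 = 1 -> A i0 j1 = 0 -> A i1 j0 = 0 -> A i1 j1 = 1 ->
  (\rank A <= 2)%N -> A k l = A k j0 * A i0 l + A k j1 * A i1 l.
Proof.
move=> A00 A01 A10 A11 rankA; apply/eqP; rewrite -subr_eq0.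
apply: contraLR rankA => schur_neq0; rewrite -ltnNge.
set u := A i0 l; set v := A i1 l; set x := A k j0; set y := A k j1.
set s := A k l - _ in schur_neq0.
have Akl : A k l = s + (x * u + y * v) by rewrite subrK.
clearbody s.
pose M := mxsub (fun p : 'I_3 => nth i0 [:: i0; i1; k] p)
                (fun q : 'I_3 => nth j0 [:: j0; j1; l] q) A.
(* Inverse of [[1,0,u],[0,1,v],[x,y,x u + y v + s]], with Schur complement s. *)
pose N : 'M[F]_3 := \matrix_(p, q) nth 0 (nth [::]
  [:: [:: 1 + u * x / s; u * y / s; - u / s];
      [:: v * x / s; 1 + v * y / s; - v / s];
      [:: - x / s; - y / s; 1 / s]] p) q.
have MN : M *m N = 1%:M.
  apply/matrixP => p q; rewrite !mxE !big_ord_recr big_ord0 /= !mxE.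
  case: p => [[|[|[|p]]] ?] //=; case: q => [[|[|[|q]]] ?] //=;
    rewrite ?A00 ?A01 ?A10 ?A11 -/u -/v -/x -/y ?Akl; field; exact: schur_neq0.
have rankM : \rank M = 3 by apply/mxrank_unit/(proj1 (mulmx1_unit MN)).
by rewrite -[3%N]rankM mxrank_mxsub.
Qed.

Lemma conjT_mul (R : rcfType) m n p (A : 'M[R[i]]_(m, n)) (B : 'M[R[i]]_(n, p)) :
  conjT (A *m B) = conjT B *m conjT A.
Proof. by rewrite /conjT map_mxM trmx_mul. Qed.

Lemma conjTK (R : rcfType) m n (A : 'M[R[i]]_(m, n)) : conjT (conjT A) = A.
Proof. by apply/matrixP => i j; rewrite /conjT !mxE conjcK. Qed.

Lemma psd_mul_conjT (R : rcfType) n k (Q : 'M[R[i]]_(n, k)) : psd (Q *m conjT Q).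
Proof.
split; first by rewrite conjT_mul conjTK.
move=> v; have -> : conjT v *m (Q *m conjT Q) *m v
                  = conjT (conjT Q *m v) *m (conjT Q *m v).
  by rewrite conjT_mul conjTK !mulmxA.
rewrite !mxE; apply: sumr_ge0 => j _.
by rewrite /conjT !mxE mulrC; apply: mulcJ_ge0.
Qed.

Lemma mxrank_mul_conjT (R : rcfType) n k (Q : 'M[R[i]]_(n, k)) :
  (\rank (Q *m conjT Q) <= k)%N.
Proof. exact: leq_trans (mxrankM_maxr _ _) (rank_leq_row _). Qed.

(* (a, b, c) and (a', b', c') are unit vectors, d is their dot product and
   (e, f, g) is the cross product (a', b', c') x (a, b, c). *)
Definition Pmx_params {R : rcfType} (a b c a' b' c' d e f g : R) : Prop :=
  a ^+ 2 + b ^+ 2 + c ^+ 2 = 1 /\ a' ^+ 2 + b' ^+ 2 + c' ^+ 2 = 1 /\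
  d = a * a' + b * b' + c * c' /\ e = b' * c - b * c' /\
  f = a * c' - a' * c /\ g = a' * b - a * b'.

Section PmxFacts.
Variables (R : rcfType) (a b c a' b' c' d e f g : R).
Local Notation P := (Pmx a b c a' b' c' d e f g).
Local Notation o k := (@Ordinal 6 k isT).

Lemma Pmx_eq_Qmx_mul_conjT :
  Pmx_params a b c a' b' c' d e f g ->
  P = Qmx a b c a' b' c' *m conjT (Qmx a b c a' b' c').
Proof.
move=> [norm_u [norm_u' [-> [-> [-> ->]]]]].
apply/matrixP => i j.
rewrite /Qmx /Pmx /mx_of_rows /conjT !mxE !big_ord_recr big_ord0 /= !mxE.
by case: i => [[|[|[|[|[|[|i]]]]]] ?] //=; case: j => [[|[|[|[|[|[|j]]]]]] ?] //=;
  simpc; congr Complex; lra.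
Qed.

Lemma Pmx_rank_ge2 : (2 <= \rank P)%N.
Proof.
pose h (p : 'I_2) := nth (o 0) [:: o 0; o 1] p.
apply: (leq_trans _ (mxrank_mxsub h h P)).
have -> : mxsub h h P = 1%:M.
  apply/matrixP => p q; rewrite /Pmx /mx_of_rows !mxE.
  by case: p => [[|[|p]] ?] //=; case: q => [[|[|q]] ?].
by rewrite mxrank1.
Qed.

Lemma Pmx_params_of_rank_le2 :
  (\rank P <= 2)%N -> Pmx_params a b c a' b' c' d e f g.
Proof.
move=> rankP.
have P00 : P (o 0) (o 0) = 1 by rewrite !mxE.
have P01 : P (o 0) (o 1) = 0 by rewrite !mxE.
have P10 : P (o 1) (o 0) = 0 by rewrite !mxE.
have P11 : P (o 1) (o 1) = 1 by rewrite !mxE.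
have := mxrank_le2_entry (o 2) (o 2) P00 P01 P10 P11 rankP.
have := mxrank_le2_entry (o 4) (o 4) P00 P01 P10 P11 rankP.
have := mxrank_le2_entry (o 2) (o 4) P00 P01 P10 P11 rankP.
have := mxrank_le2_entry (o 2) (o 5) P00 P01 P10 P11 rankP.
rewrite /Pmx /mx_of_rows !mxE /=; simpc.
by case=> ? ?; case=> ? ?; case=> ? _; case=> ? _; do ![split]; lra.
Qed.

End PmxFacts.

Arguments Pmx_eq_Qmx_mul_conjT {R a b c a' b' c' d e f g}.
Arguments Pmx_params_of_rank_le2 {R a b c a' b' c' d e f g}.

Theorem mainTheorem3 (R : rcfType) (a b c a' b' c' d e f g : R) :
  ((psd (Pmx a b c a' b' c' d e f g) /\ \rank (Pmx a b c a' b' c' d e f g) = 2%N)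
   <->
   (a ^+ 2 + b ^+ 2 + c ^+ 2 = 1 /\ a' ^+ 2 + b' ^+ 2 + c' ^+ 2 = 1 /\
       d = a * a' + b * b' + c * c' /\ e = b' * c - b * c' /\
       f = a * c' - a' * c /\ g = a' * b - a * b'))
  /\
  ((a ^+ 2 + b ^+ 2 + c ^+ 2 = 1 /\ a' ^+ 2 + b' ^+ 2 + c' ^+ 2 = 1 /\
       d = a * a' + b * b' + c * c' /\ e = b' * c - b * c' /\
       f = a * c' - a' * c /\ g = a' * b - a * b') ->
   Pmx a b c a' b' c' d e f g = Qmx a b c a' b' c' *m conjT (Qmx a b c a' b' c')).
Proof.
split; last exact: Pmx_eq_Qmx_mul_conjT.
split=> [[_ rankP] | params].
  by apply: Pmx_params_of_rank_le2; rewrite rankP.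
have PQ := Pmx_eq_Qmx_mul_conjT params.
split; first by rewrite PQ; apply: psd_mul_conjT.
apply/anti_leq; rewrite Pmx_rank_ge2 andbT PQ.
apply: mxrank_mul_conjT.
Qed.
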